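(* For every positive integer $k$, every graph $G\in\mathcal{G}_k$ is connected and cubic and satisfies $\alpha(G)=6k$ and $\mathrm{diss}(G)=10k$.
   Context: All graphs are finite; $\alpha(G)$ is the independence number; a set $D$ of vertices is a dissociation set if the induced subgraph $G[D]$ has maximum degree at most $1$, and $\mathrm{diss}(G)$ is the maximum order of a dissociation set. Let $K_4^*$ be the graph obtained from $K_4$ with vertices $a,b,c,d$ by subdividing the edge $ab$ twice, i.e. replacing $ab$ by a path $a\,x\,y\,b$ with new vertices $x,y$ (the subdivision vertices). For a positive integer $k$, $\mathcal{H}_k$ is the set of all connected multigraphs $H$ (parallel edges allowed, no loops) of maximum degree at most $3$ such that: (i) $3n_1+2n_2+n_3=6k$, where $n_i$ is the number of vertices of degree $i$ (degree = number of incident edges); (ii) $H$ has an induced matching $M$ with $|M|=k$ covering all vertices of degree $1$; (iii) $H-M$ has an orientation in which every vertex of $H$ not incident with an edge of $M$ has exactly two outgoing edges. $\mathcal{G}_k$ is the set of all graphs $G$ obtained from some $H\in\mathcal{H}_k$ by replacing each vertex $w$ of $H$ by a gadget $G_w$ with designated attachment vertices, one per edge of $H$ at $w$, and replacing each edge $ww'$ of $H$ by an edge joining the attachment vertex of $G_w$ assigned to this edge with the attachment vertex of $G_{w'}$ assigned to this edge (distinct edges of $H$ use distinct attachment vertices). The gadgets are: if $\deg_H(w)=3$, $G_w$ is a triangle and each of its three vertices is the attachment vertex for one of the three edges at $w$; if $\deg_H(w)=2$, $G_w$ is a copy of $K_4^*$ whose two subdivision vertices $x,y$ are the attachment vertices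 for the two edges at $w$; if $\deg_H(w)=1$, $G_w$ is one of the following two graphs on $9$ vertices $z,a_1,a_2,p_1,q_1,r_1,p_2,q_2,r_2$, with $z$ the attachment vertex: both have edges $za_1$, $za_2$, the triangles $p_1q_1r_1$ and $p_2q_2r_2$, and the edge $r_1r_2$; the first additionally has edges $a_1p_1,a_1q_1,a_2p_2,a_2q_2$, the second additionally has edges $a_1p_1,a_1q_2,a_2p_2,a_2q_1$. *)

From mathcomp Require Import all_boot.
Set Implicit Arguments. Unset Strict Implicit. Unset Printing Implicit Defensive.

Section SimpleGraph.
Variables (T : finType) (adj : rel T).

Definition sgraph_simple : Prop := irreflexive adj /\ symmetric adj.
Definition gconnected : Prop := forall x y : T, connect adj x y.
Definition cubic : Prop := forall x : T, #|[set y | adj x y]| = 3.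
Definition independent (S : {set T}) : bool :=
  [forall x in S, forall y in S, ~~ adj x y].
Definition dissociation (D : {set T}) : bool :=
  [forall x in D, #|[set y in D | adj x y]| <= 1].
Definition alpha : nat := \max_(S : {set T} | independent S) #|S|.
Definition diss : nat := \max_(D : {set T} | dissociation D) #|D|.
End SimpleGraph.

Section Multigraph.
Variables (V E : finType) (src tgt : E -> V).

Definition loopless : Prop := forall e, src e != tgt e.
Definition incident (w : V) (e : E) : bool := (src e == w) || (tgt e == w).
Definition hdeg (w : V) : nat := #|[set e | incident w e]|.
Definition joins (e : E) (u v : V) : bool :=
  ((src e == u) && (tgt e == v)) || ((src e == v) && (tgt e == u)).
Definition hadj : rel V := fun u v => [exists e, joins e u v].
Definition hconnected : Prop := forall u v : V, connect hadj u v.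
Definition ncount (i : nat) : nat := #|[set w | hdeg w == i]|.

Definition covered (M : {set E}) (w : V) : bool := [exists e in M, incident w e].
Definition induced_matching (M : {set E}) : Prop :=
  (forall e e', e \in M -> e' \in M -> e != e' ->
     forall w, ~~ (incident w e && incident w e')) /\
  (forall e, covered M (src e) -> covered M (tgt e) -> e \in M).

(* orientation o : true = oriented src -> tgt, false = tgt -> src *)
Definition outgoing (o : E -> bool) (w : V) (e : E) : bool :=
  if o e then src e == w else tgt e == w.

Definition in_Hk (k : nat) : Prop :=
  loopless /\ hconnected /\ (forall w, hdeg w <= 3) /\
  3 * ncount 1 + 2 * ncount 2 + ncount 3 = 6 * k /\
  exists M : {set E},
    [/\ induced_matching M, #|M| = k,
        (forall w, hdeg w = 1 -> covered M w) &
        exists o : E -> bool, forall w, ~~ covered M w ->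
          #|[set e | (e \notin M) && outgoing o w e]| = 2].
End Multigraph.

(* ---------- Gadgets (local vertices numbered in 'I_9) ----------
   deg 3: triangle on 0,1,2 (all attachment vertices).
   deg 2: K4* with a=0,b=1,c=2,d=3,x=4,y=5; attachment vertices x,y.
   deg 1: z=0,a1=1,a2=2,p1=3,q1=4,r1=5,p2=6,q2=7,r2=8; attachment z;
          variant b = true is the first graph, b = false the second. *)
Definition gsize (d : nat) : nat :=
  match d with 3 => 3 | 2 => 6 | 1 => 9 | _ => 0 end.

Definition attset (d : nat) : {set 'I_9} :=
  match d with
  | 3 => [set i : 'I_9 | i < 3]
  | 2 => [set i : 'I_9 | (nat_of_ord i == 4) || (nat_of_ord i == 5)]
  | 1 => [set i : 'I_9 | nat_of_ord i == 0]
  | _ => set0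
  end.

Definition gedges (d : nat) (b : bool) : seq (nat * nat) :=
  match d with
  | 3 => [:: (0,1); (1,2); (0,2)]
  | 2 => [:: (0,2); (0,3); (1,2); (1,3); (2,3); (0,4); (4,5); (5,1)]
  | 1 => [:: (0,1); (0,2); (3,4); (4,5); (3,5); (6,7); (7,8); (6,8); (5,8); (1,3); (2,6)]
         ++ (if b then [:: (1,4); (2,7)] else [:: (1,7); (2,4)])
  | _ => [::]
  end.

Definition gadj (d : nat) (b : bool) (i j : 'I_9) : bool :=
  ((nat_of_ord i, nat_of_ord j) \in gedges d b) ||
  ((nat_of_ord j, nat_of_ord i) \in gedges d b).

Section Construction.
Variables (V E : finType) (src tgt : E -> V).

Definition Gvert := {p : V * 'I_9 | p.2 < gsize (hdeg src tgt p.1)}.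

(* att w e = local vertex of G_w attached to edge e (meaningful for e incident to w) *)
Definition valid_attach (att : V -> E -> 'I_9) : Prop :=
  forall w : V,
    (forall e, incident src tgt w e -> att w e \in attset (hdeg src tgt w)) /\
    {in [pred e | incident src tgt w e] &, injective (att w)} /\
    attset (hdeg src tgt w) \subset [set att w e | e in [pred e | incident src tgt w e]].

Definition Gadj (att : V -> E -> 'I_9) (var : V -> bool) : rel Gvert :=
  fun u v =>
    let w := (val u).1 in let i := (val u).2 in
    let w' := (val v).1 in let j := (val v).2 in
    ((w == w') && gadj (hdeg src tgt w) (var w) i j) ||
    [exists e, joins src tgt e w w' && (att w e == i) && (att w' e == j)].
End Construction.

Arguments Gadj {V E} src tgt att var.
Arguments valid_attach {V E} src tgt att.
Arguments in_Hk {V E} src tgt k.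

From mathcomp Require Import all_boot zify.
Set Implicit Arguments. Unset Strict Implicit. Unset Printing Implicit Defensive.

(* The gadget of a vertex of degree 1, 2, 3 has independence number 3, 2, 1,
   so condition (i) says that these numbers sum to 6k, which bounds alpha(G).
   The bound is attained by fixed maximum independent sets of the pendant
   gadgets and of K4* avoiding the attachment vertices, together with, in each
   triangle, the vertex on an edge of H - M entering it: an edge enters only
   one of its ends.
   Counting edges by their tails shows that vertices covered by M have no
   outgoing edges, so each vertex w has 2 - cov(w) reserved edges (its M-edge,
   or its two outgoing edges).  A fixed dissociation core of every gadget plus
   the attachment vertices of the reserved edges is a dissociation set of size
   10k.  Conversely a dissociation set D meets G_w in at most core(w) + t(w)
   vertices, where t(w) <= 2 attachment vertices are used, and if t(w) = 2 their
   partners across H are not in D; discharging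
   3|D /\ G_w| + (unused attachments) <= 5 alpha(G_w) + (charged edges)
   over vertices, and charged edges against unused attachments over edges,
   gives |D| <= 10k.  The finitely many facts about single gadgets are checked
   by computation over all subsets of their nine local vertices. *)

(** * Gadgets *)

Definition gadget_alpha (d : nat) : nat :=
  match d with 1 => 3 | 2 => 2 | 3 => 1 | _ => 0 end.

Definition gadget_core_size (d : nat) : nat :=
  match d with 1 => 4 | 2 => 2 | _ => 0 end.

(* Finite sets do not reduce under [vm_compute], so sets of local vertices are
   encoded as predicates on [nat] and enumerated through [bool_seqs]. *)
Definition I9 : seq nat := iota 0 9.
Arguments I9 : simpl never.
Definition count9 (f : pred nat) : nat := count f I9.
Definition all9 (f : pred nat) : bool := all f I9.

Definition nat_gadj (d : nat) (b : bool) (i j : nat) : bool :=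
  ((i, j) \in gedges d b) || ((j, i) \in gedges d b).
Definition nat_att (d n : nat) : bool :=
  match d with 3 => n < 3 | 2 => (n == 4) || (n == 5) | 1 => n == 0 | _ => false end.
(* [nat_core]: p1, q1, p2, q2 of the pendant gadget and c, d of K4*, a
   dissociation set avoiding the attachment vertices; [nat_indep]: a maximum
   independent set avoiding them. *)
Definition nat_core (d n : nat) : bool :=
  match d with 1 => n \in [:: 3; 4; 6; 7] | 2 => n \in [:: 2; 3] | _ => false end.
Definition nat_indep (d n : nat) : bool :=
  match d with 1 => n \in [:: 1; 2; 5] | 2 => n \in [:: 0; 1] | _ => false end.
(* Distance from the local vertex 0 inside the gadget. *)
Definition gadget_depth (d i : nat) : nat :=
  nth 0 (match d with 3 => [:: 0; 1; 1] | 2 => [:: 0; 2; 1; 1; 1; 2]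
                    | _ => [:: 0; 1; 1; 2; 2; 3; 2; 2; 3] end) i.

Definition nat_ldeg (d : nat) (b : bool) (f : pred nat) (i : nat) : nat :=
  count9 (fun j => f j && nat_gadj d b i j).
Definition nat_in_gadget (d : nat) (f : pred nat) : bool := all9 (fun n => f n ==> (n < gsize d)).

Definition shape_spec (d : nat) (b : bool) : bool :=
  [&& all9 (fun i => (i < gsize d) ==> (count9 (nat_gadj d b i) + nat_att d i == 3)),
      all9 (fun i => all9 (fun j => nat_gadj d b i j ==> (j < gsize d))),
      nat_in_gadget d (nat_att d),
      all9 (fun i => ~~ nat_gadj d b i i) &
      all9 (fun i => ((i < gsize d) && (i != 0)) ==>
        has (fun j => nat_gadj d b i j && (gadget_depth d j < gadget_depth d i)) I9)].

Definition core_spec (d : nat) : bool :=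
  all9 (fun i => nat_core d i ==> ((i < gsize d) && ~~ nat_att d i)) &&
  (count9 (nat_core d) == gadget_core_size d).

Definition indep_set_spec (d : nat) (b : bool) : bool :=
  [&& nat_in_gadget d (nat_indep d),
      all9 (fun n => nat_indep d n ==> all9 (fun m => nat_indep d m ==> ~~ nat_gadj d b n m)),
      all9 (fun n => nat_indep d n ==> ~~ nat_att d n) &
      (d == 3) || (count9 (nat_indep d) == gadget_alpha d)].

Definition diss_spec (d : nat) (b : bool) (f : pred nat) : bool :=
  let t := count9 (fun n => f n && nat_att d n) in
  (nat_in_gadget d f && all9 (fun n => f n ==> (nat_ldeg d b f n <= 1))) ==>
  [&& count9 f <= gadget_core_size d + t, t <= 2 &
      (2 <= t) ==> all9 (fun n => (f n && nat_att d n) ==> (0 < nat_ldeg d b f n))].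

Definition indep_spec (d : nat) (b : bool) (f : pred nat) : bool :=
  (nat_in_gadget d f && all9 (fun n => f n ==> all9 (fun m => f m ==> ~~ nat_gadj d b n m))) ==>
  (count9 f <= gadget_alpha d).

Definition core_ext_spec (d : nat) (b : bool) (A : pred nat) : bool :=
  (all9 (fun n => A n ==> nat_att d n) && ((count9 A == 1) || ((count9 A == 2) && (d != 1)))) ==>
  let f n := nat_core d n || A n in
  all9 (fun n => f n ==> (nat_ldeg d b f n <= 1)) &&
  ((count9 A == 1) ==> all9 (fun n => A n ==> (nat_ldeg d b f n == 0))).

Fixpoint bool_seqs (n : nat) : seq (seq bool) :=
  if n is n'.+1 then [seq b :: l | b <- [:: true; false], l <- bool_seqs n'] else [:: [::]].

Definition all_subsets9 (P : pred nat -> bool) : bool :=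
  all (fun l => P (nth false l)) (bool_seqs 9).

Lemma gadget_check (P : nat -> bool -> bool) (d : nat) (b : bool) :
  0 < d <= 3 -> [&& P 1 true, P 1 false, P 2 true, P 2 false, P 3 true & P 3 false] -> P d b.
Proof.
by case: d => [|[|[|[|d]]]] // _ /and5P [? ? ? ? /andP [? ?]]; case: b.
Qed.

Lemma shape_check d b : 0 < d <= 3 -> shape_spec d b.
Proof. by move=> Hd; apply: (@gadget_check shape_spec _ _ Hd); vm_compute. Qed.

Lemma core_check d : 0 < d <= 3 -> core_spec d.
Proof. by move=> Hd; apply: (@gadget_check (fun d _ => core_spec d) _ true Hd); vm_compute. Qed.

Lemma indep_set_check d b : 0 < d <= 3 -> indep_set_spec d b.
Proof. by move=> Hd; apply: (@gadget_check indep_set_spec _ _ Hd); vm_compute. Qed.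

Lemma diss_check d b : 0 < d <= 3 -> all_subsets9 (diss_spec d b).
Proof. by move=> Hd; apply: (@gadget_check (fun d b => all_subsets9 (diss_spec d b)) _ _ Hd); vm_compute. Qed.

Lemma indep_check d b : 0 < d <= 3 -> all_subsets9 (indep_spec d b).
Proof. by move=> Hd; apply: (@gadget_check (fun d b => all_subsets9 (indep_spec d b)) _ _ Hd); vm_compute. Qed.

Lemma core_ext_check d b : 0 < d <= 3 -> all_subsets9 (core_ext_spec d b).
Proof. by move=> Hd; apply: (@gadget_check (fun d b => all_subsets9 (core_ext_spec d b)) _ _ Hd); vm_compute. Qed.

Lemma bool_seqsP n (l : seq bool) : size l = n -> l \in bool_seqs n.
Proof.
elim: n l => [|n IH] [|x l] //= [Hs].
have := @allpairs_f _ _ _ (fun b l => b :: l) [:: true; false] (bool_seqs n) x l.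
by apply; [case: x | apply: IH].
Qed.

Definition natset (X : {set 'I_9}) : pred nat :=
  nth false [seq i \in X | i <- enum 'I_9].

Lemma natsetE X (i : 'I_9) : natset X i = (i \in X).
Proof. by rewrite /natset (nth_map i) ?size_enum_ord ?ltn_ord // nth_ord_enum. Qed.

Lemma all_subsets9P P : all_subsets9 P -> forall X, P (natset X).
Proof. by move=> /allP H X; apply/H/bool_seqsP; rewrite size_map size_enum_ord. Qed.

Lemma all9P (p : pred nat) : reflect (forall i : 'I_9, p i) (all9 p).
Proof.
apply: (iffP allP) => [H i|H n]; first by apply: H; rewrite mem_iota /= ltn_ord.
by rewrite mem_iota add0n => Hn; apply: (H (Ordinal Hn)).
Qed.

Lemma card9 (Q : pred 'I_9) (f : pred nat) :
  (forall i : 'I_9, Q i = f i) -> #|[set j | Q j]| = count9 f.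
Proof.
move=> H; rewrite cardsE cardE /enum_mem size_filter -enumT /count9 /I9 -val_enum_ord count_map.
by apply: eq_count => i /=; rewrite -H.
Qed.

Lemma card_natset (X : {set 'I_9}) : #|X| = count9 (natset X).
Proof. by rewrite -(card9 (Q := mem X)) ?cardsE // => i; rewrite natsetE. Qed.

Lemma attsetE d (i : 'I_9) : (i \in attset d) = nat_att d i.
Proof. by case: d => [|[|[|[|d]]]]; rewrite /attset ?inE. Qed.

Lemma in_gadget_natset d (X : {set 'I_9}) :
  (forall i, i \in X -> i < gsize d) -> nat_in_gadget d (natset X).
Proof. by move=> H; apply/all9P => i; rewrite natsetE; apply/implyP/H. Qed.

Definition core_set (d : nat) : {set 'I_9} := [set i : 'I_9 | nat_core d i].
Definition indep_set (d : nat) : {set 'I_9} := [set i : 'I_9 | nat_indep d i].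

Section Gadget.
Variables (d : nat) (b : bool).
Hypothesis Hd : 0 < d <= 3.
Local Notation adj := (gadj d b).

Lemma ldeg_natset (X : {set 'I_9}) i : #|[set j in X | adj i j]| = nat_ldeg d b (natset X) i.
Proof. by apply: card9 => j; rewrite natsetE. Qed.

Lemma gadj_sym : symmetric adj.
Proof. by move=> i j; rewrite /gadj orbC. Qed.

Lemma gadget_shape :
  [/\ forall i : 'I_9, i < gsize d -> #|[set j | adj i j]| + (i \in attset d) = 3,
      forall i j : 'I_9, adj i j -> j < gsize d,
      forall i : 'I_9, i \in attset d -> i < gsize d,
      irreflexive adj &
      forall i : 'I_9, i < gsize d -> i != 0 :> nat ->
        exists2 j : 'I_9, adj i j & gadget_depth d j < gadget_depth d i].
Proof.
have /and5P [/all9P H1 /all9P H2 /all9P H3 /all9P H4 /all9P H5] := shape_check b Hd; split.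
- by move=> i Hi; apply/eqP; move: (H1 i); rewrite Hi attsetE (card9 (f := nat_gadj d b i)).
- by move=> i j; move: (H2 i) => /all9P /(_ j) /implyP.
- by move=> i; rewrite attsetE; apply/implyP.
- by move=> i; apply/negbTE/H4.
- move=> i Hi Hi0; move: (H5 i); rewrite Hi Hi0 => /hasP [j Hj /andP [Hg Hr]].
  by move: Hj; rewrite mem_iota add0n => Hj; exists (Ordinal Hj).
Qed.

Lemma core_setP :
  [/\ forall i, i \in core_set d -> i < gsize d,
      [disjoint core_set d & attset d] & #|core_set d| = gadget_core_size d].
Proof.
have /andP [/all9P H1 /eqP H2] := core_check Hd; split.
- by move=> i; rewrite inE => /(implyP (H1 i)) /andP [].
- by apply/pred0P => i /=; rewrite inE attsetE; apply/negP => /andP [/(implyP (H1 i)) /andP [_ /negP]].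
- by rewrite (card9 (f := nat_core d)).
Qed.

Lemma indep_setP :
  [/\ forall i, i \in indep_set d -> i < gsize d,
      {in indep_set d &, forall i j, ~~ adj i j},
      [disjoint indep_set d & attset d] &
      d != 3 -> #|indep_set d| = gadget_alpha d].
Proof.
have /and4P [/all9P H1 /all9P H2 /all9P H3 H4] := indep_set_check b Hd; split.
- by move=> i; rewrite inE; apply/implyP.
- by move=> i j; rewrite !inE => Hi Hj; move: (implyP (H2 i) Hi) => /all9P /(_ j); rewrite Hj.
- by apply/pred0P => i /=; rewrite inE attsetE; apply/negP => /andP [/(implyP (H3 i)) /negP].
- by move=> Hd3; move: H4; rewrite (negbTE Hd3) => /eqP <-; apply: card9.
Qed.

Lemma gadget_dissociation_bound (X : {set 'I_9}) :
  (forall i, i \in X -> i < gsize d) ->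
  (forall i, i \in X -> #|[set j in X | adj i j]| <= 1) ->
  [/\ #|X| <= gadget_core_size d + #|X :&: attset d|, #|X :&: attset d| <= 2 &
      2 <= #|X :&: attset d| -> forall i, i \in X :&: attset d -> 0 < #|[set j in X | adj i j]|].
Proof.
move=> Hin Hdeg; have HXA : #|X :&: attset d| = count9 (fun n => natset X n && nat_att d n).
  rewrite -(card9 (Q := fun i => (i \in X) && (i \in attset d))) => [|i]; last by rewrite natsetE attsetE.
  by congr #|_|; apply/setP => i; rewrite !inE.
have := all_subsets9P (diss_check b Hd) X; rewrite /diss_spec in_gadget_natset //=.
have -> /= : all9 (fun n => natset X n ==> (nat_ldeg d b (natset X) n <= 1)).
  by apply/all9P => i; rewrite natsetE -ldeg_natset; apply/implyP/Hdeg.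
rewrite -card_natset -HXA => /and3P [-> -> /implyP H3]; split=> // H2 i Hi.
by move: (H3 H2) => /all9P /(_ i); rewrite -ldeg_natset natsetE -attsetE -in_setI Hi.
Qed.

Lemma gadget_independence_bound (X : {set 'I_9}) :
  (forall i, i \in X -> i < gsize d) -> {in X &, forall i j, ~~ adj i j} ->
  #|X| <= gadget_alpha d.
Proof.
move=> Hin Hind; have := all_subsets9P (indep_check b Hd) X.
rewrite /indep_spec in_gadget_natset // card_natset /= => /implyP; apply.
apply/all9P => i; rewrite natsetE; apply/implyP => Hi; apply/all9P => j; rewrite natsetE.
by apply/implyP => Hj; apply: Hind.
Qed.

Lemma core_attach_dissociation (A : {set 'I_9}) :
  A \subset attset d -> #|A| = 1 \/ (#|A| = 2 /\ d != 1) ->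
  let X := core_set d :|: A in
  (forall i, i \in X -> #|[set j in X | adj i j]| <= 1) /\
  (#|A| = 1 -> forall i, i \in A -> #|[set j in X | adj i j]| = 0).
Proof.
move=> HA Hc X; have := all_subsets9P (core_ext_check b Hd) A.
rewrite /core_ext_spec -card_natset.
have -> /= : all9 (fun n => natset A n ==> nat_att d n) && ((#|A| == 1) || ((#|A| == 2) && (d != 1))).
  apply/andP; split; last by case: Hc => [->|[-> ->]].
  by apply/all9P => i; rewrite natsetE -attsetE; apply/implyP/(subsetP HA).
have eX (i : 'I_9) : nat_core d i || natset A i = (i \in X) by rewrite natsetE !inE.
have eD (i : 'I_9) : nat_ldeg d b (fun n => nat_core d n || natset A n) i = #|[set j in X | adj i j]|.
  by symmetry; apply: card9 => j; rewrite eX.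
move=> /andP [/all9P H1 /implyP H2]; split=> [i|HA1 i Hi].
  by move: (H1 i); rewrite eX eD => /implyP.
by move: (H2 (introT eqP HA1)) => /all9P /(_ i); rewrite natsetE Hi eD => /eqP.
Qed.
End Gadget.

(** * Counting in the multigraph H *)

Lemma sum_nat_of_bool (T : finType) (P : pred T) : \sum_(x : T) (P x : nat) = #|[set x | P x]|.
Proof. by rewrite -sum1dep_card [RHS]big_mkcond; apply: eq_bigr => x _; case: (P x). Qed.

Lemma double_counting (T U : finType) (R : T -> U -> bool) :
  \sum_(x : T) #|[set y | R x y]| = \sum_(y : U) #|[set x | R x y]|.
Proof.
under eq_bigr do rewrite -sum_nat_of_bool.
by rewrite exchange_big; apply: eq_bigr => y _; rewrite sum_nat_of_bool.
Qed.

Lemma card_set_pair (T U : finType) (A : {set T * U}) :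
  #|A| = \sum_(x : T) #|[set y | (x, y) \in A]|.
Proof.
rewrite -sum1_card; under [RHS]eq_bigr do rewrite -sum1_card.
by rewrite pair_big_dep; apply: eq_bigl => -[x y]; rewrite inE.
Qed.

Section Multigraph.
Variables (V E : finType) (src tgt : E -> V).
Hypothesis Hloop : loopless src tgt.
Local Notation inc := (incident src tgt).
Local Notation joins := (joins src tgt).

Definition other_end (w : V) (e : E) : V := if src e == w then tgt e else src e.

Lemma joinsE e w w' : joins e w w' = inc w e && (w' == other_end w e).
Proof.
rewrite /joins /incident /other_end; have Hl := Hloop e.
case: (src e =P w) => [<-|Hs] /=.
  by rewrite (eq_sym (tgt e) (src e)) (negbTE Hl) andbF orbF eq_sym.
by rewrite andbC (eq_sym w').
Qed.

Lemma joins_incident e w w' : joins e w w' -> inc w e.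
Proof. by rewrite joinsE => /andP []. Qed.

Lemma joins_sym e w w' : joins e w w' = joins e w' w.
Proof. by rewrite /joins orbC. Qed.

Lemma joins_other_end w e : inc w e -> joins e w (other_end w e).
Proof. by move=> H; rewrite joinsE H eqxx. Qed.

Lemma other_end_incident w e : inc w e -> inc (other_end w e) e.
Proof. by rewrite /incident /other_end; case: (src e =P w) => _ /=; rewrite eqxx ?orbT. Qed.

Lemma other_end_neq w e : inc w e -> other_end w e != w.
Proof.
rewrite /incident /other_end; have := Hloop e.
case: (src e =P w) => [<-|Hs] /=; first by rewrite eq_sym.
by move=> _ /eqP Ht; apply/eqP => Hs'; apply: Hs.
Qed.

Lemma incident_endpoints x w e : inc x e -> inc w e -> x = w \/ x = other_end w e.
Proof.
rewrite /incident /other_end; case: (src e =P w) => [<-|Hs] /=.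
  by case/orP => /eqP ->; [left|right].
by move=> Hx /eqP Ht; case/orP: Hx => /eqP <-; [right|left].
Qed.

Lemma card_ends e : #|[set w | inc w e]| = 2.
Proof.
have -> : [set w | inc w e] = [set src e; tgt e].
  by apply/setP => w; rewrite !inE /incident !(eq_sym w).
by rewrite cards2 (Hloop e).
Qed.

Lemma handshake : \sum_(w : V) hdeg src tgt w = 2 * #|E|.
Proof.
rewrite /hdeg double_counting; under eq_bigr do rewrite card_ends.
by rewrite sum_nat_const cardT -cardT mulnC.
Qed.

Section MatchingOrientation.
Variables (M : {set E}) (o : E -> bool).
Hypothesis Hm : induced_matching src tgt M.
Local Notation cov := (covered src tgt M).
Local Notation outg := (outgoing src tgt o).

Definition outdeg (w : V) : nat := #|[set e | (e \notin M) && outg w e]|.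

Lemma covered_card w : (cov w : nat) = #|[set e | (e \in M) && inc w e]|.
Proof.
have Hle : #|[set e | (e \in M) && inc w e]| <= 1.
  apply/card_le1_eqP => x y; rewrite !inE => /andP [Hx Hwx] /andP [Hy Hwy].
  by apply/eqP/negPn/negP => Hne; move: (Hm.1 _ _ Hy Hx Hne w); rewrite Hwx Hwy.
move: Hle; rewrite /covered; case: existsP => [[e /andP [He Hwe]]|Hn] Hle.
  by apply/eqP; rewrite eqn_leq Hle andbT; apply/card_gt0P; exists e; rewrite inE He.
symmetry; apply: eq_card0 => e; rewrite !inE; apply/negP => H; apply: Hn; exists e.
by rewrite H.
Qed.

Lemma sum_covered : \sum_(w : V) (cov w : nat) = 2 * #|M|.
Proof.
under eq_bigr do rewrite covered_card.
rewrite double_counting (eq_bigr (fun e => 2 * (e \in M))) => [|e _].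
  rewrite -big_distrr sum_nat_of_bool; congr (2 * _).
  by apply: eq_card => e; rewrite inE.
case: (e \in M); last by rewrite muln0; apply: eq_card0 => w; rewrite inE.
by rewrite muln1 -(card_ends e); apply: eq_card => w; rewrite !inE.
Qed.

Lemma outgoing_incident w e : outg w e -> inc w e.
Proof. by rewrite /outgoing /incident; case: (o e) => ->; rewrite ?orbT. Qed.

Lemma sum_outdeg : \sum_(w : V) outdeg w = #|E| - #|M|.
Proof.
rewrite /outdeg double_counting (eq_bigr (fun e => (e \notin M : nat))) => [|e _].
  rewrite sum_nat_of_bool -(cardsC M) addKn.
  by apply: eq_card => e; rewrite !inE.
case: (e \in M) => /=; first by apply: eq_card0 => w; rewrite !inE.
have -> : [set w | outg w e] = [set (if o e then src e else tgt e)].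
  by apply/setP => w; rewrite !inE /outgoing; case: (o e); rewrite eq_sym.
by rewrite cards1.
Qed.

Lemma outgoing_joins e w w' : joins e w w' -> outg w' e = ~~ outg w e.
Proof.
move=> Hj; have := Hloop e; move: Hj; rewrite /joins /outgoing.
by case: (o e) => /orP [] /andP [/eqP <- /eqP <-] Hl; rewrite eqxx ?(negbTE Hl) // eq_sym (negbTE Hl).
Qed.

Lemma uncovered_notin_matching w e : ~~ cov w -> inc w e -> e \notin M.
Proof. by move=> Hc Hi; apply: contra Hc => HM; apply/existsP; exists e; rewrite HM. Qed.

(* The edges of [w] along which the large dissociation set uses an attachment
   vertex of [G_w]. *)
Definition reserved (w : V) : {set E} := [set e | inc w e && ((e \in M) || outg w e)].

Lemma reserved_incident w e : e \in reserved w -> inc w e.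
Proof. by rewrite inE => /andP []. Qed.

Lemma reserved_shared w e : e \in reserved w -> e \in reserved (other_end w e) -> e \in M.
Proof.
rewrite !inE => /andP [Hi /orP [//|Ho]] /andP [_ /orP [//|]].
by rewrite (outgoing_joins (joins_other_end Hi)) Ho.
Qed.

End MatchingOrientation.
End Multigraph.

Section DegreeCount.
Variables (V E : finType) (src tgt : E -> V) (k : nat) (M : {set E}) (o : E -> bool).
Hypothesis Hloop : loopless src tgt.
Hypothesis Hconn : hconnected src tgt.
Hypothesis Hdeg3 : forall w, hdeg src tgt w <= 3.
Hypothesis Hweight : 3 * ncount src tgt 1 + 2 * ncount src tgt 2 + ncount src tgt 3 = 6 * k.
Local Notation hd := (hdeg src tgt).
Local Notation cov := (covered src tgt M).

Lemma sum_gadget_alpha : \sum_(w : V) gadget_alpha (hd w) = 6 * k.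
Proof.
rewrite -Hweight /ncount -!sum_nat_of_bool !big_distrr -!big_split.
by apply: eq_bigr => w _; case: (hd w) => [|[|[|[|n]]]].
Qed.

Hypothesis Hk : 0 < k.

(* An isolated vertex would be all of H, making the weight sum 0. *)
Lemma hdeg_bounds w : 0 < hd w <= 3.
Proof.
rewrite Hdeg3 andbT lt0n; apply/negP => /eqP H0.
have Hw v : v = w.
  have /connectP [[|x p] /= Hp ->] := Hconn w v => //.
  case/andP: Hp => /existsP [e /(joins_incident Hloop) He] _.
  by move: H0 => /eqP; rewrite cards_eq0 => /eqP /setP /(_ e); rewrite !inE He.
have Hn i : 0 < i -> ncount src tgt i = 0.
  move=> Hi; apply: eq_card0 => v; rewrite !inE (Hw v) H0.
  by case: i Hi.
by move: Hweight; rewrite !Hn //; lia.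
Qed.

Hypothesis Hm : induced_matching src tgt M.
Hypothesis HMk : #|M| = k.
Hypothesis Horient : forall w, ~~ cov w -> outdeg src tgt M o w = 2.

(* Counting non-matching edges by their tails: the uncovered vertices already
   account for all of them. *)
Lemma outdeg_covered w : cov w -> outdeg src tgt M o w = 0.
Proof.
have Hsum : \sum_(v : V) (outdeg src tgt M o v + 2 * cov v) =
            \sum_(v : V) (2 + (if cov v then outdeg src tgt M o v else 0)).
  apply: eq_bigr => v _; case: (boolP (cov v)) => Hc; first by rewrite addnC.
  by rewrite Horient.
have Hdeg : \sum_(v : V) (hd v + gadget_alpha (hd v)) = \sum_(v : V) 4.
  by apply: eq_bigr => v _; case/andP: (hdeg_bounds v); case: (hd v) => [|[|[|[|n]]]].
rewrite big_split /= (handshake Hloop) sum_gadget_alpha sum_nat_const in Hdeg.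
have Hcov : \sum_(v : V) 2 * cov v = 2 * (2 * k) by rewrite -HMk -(sum_covered Hloop Hm) big_distrr.
rewrite big_split [X in _ = X]big_split /= sum_outdeg Hcov sum_nat_const in Hsum.
have HME := max_card M; rewrite HMk in HME.
have /eqP : \sum_(v : V) (if cov v then outdeg src tgt M o v else 0) = 0 by lia.
by rewrite sum_nat_eq0 => /forallP /(_ w) /eqP; case: (cov w).
Qed.

Lemma card_reserved w : #|reserved src tgt M o w| + cov w = 2.
Proof.
case: (boolP (cov w)) => Hc.
  have /eqP := outdeg_covered Hc; rewrite cards_eq0 => /eqP /setP Hout.
  suff -> : #|reserved src tgt M o w| = #|[set e | (e \in M) && incident src tgt w e]|.
    by rewrite -(covered_card Hm) Hc.
  apply: eq_card => e; rewrite !inE.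
  by have := Hout e; rewrite !inE; case: (e \in M); rewrite ?andbT ?orbF //= => ->; rewrite andbF.
rewrite addn0 -(Horient Hc); apply: eq_card => e; rewrite !inE.
case Hi: (incident src tgt w e) => /=; first by rewrite (negbTE (uncovered_notin_matching Hc Hi)).
by apply/esym/negbTE; apply: contraFN Hi => /andP [_ /outgoing_incident].
Qed.
End DegreeCount.

(** * The graph G *)

Section Construction.
Variables (V E : finType) (src tgt : E -> V).
Hypothesis Hloop : loopless src tgt.
Variables (att : V -> E -> 'I_9) (var : V -> bool).
Hypothesis Hatt : valid_attach src tgt att.
Hypothesis Hdeg : forall w, 0 < hdeg src tgt w <= 3.
Local Notation hd := (hdeg src tgt).
Local Notation inc := (incident src tgt).
Local Notation Gv := (Gvert src tgt).
Local Notation G := (Gadj src tgt att var).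
Local Notation oth := (other_end src tgt).

Lemma att_attset w e : inc w e -> att w e \in attset (hd w).
Proof. exact: (Hatt w).1. Qed.

Lemma att_inj w e e' : inc w e -> inc w e' -> att w e = att w e' -> e = e'.
Proof. by move=> H1 H2; apply: (Hatt w).2.1. Qed.

Lemma att_surj w (i : 'I_9) : i \in attset (hd w) -> exists2 e, inc w e & att w e = i.
Proof. by move=> /(subsetP (Hatt w).2.2) /imsetP [e He ->]; exists e. Qed.

Definition gvertex (p : V * 'I_9) (H : p.2 < gsize (hd p.1)) : Gv := exist _ p H.

Lemma gvertex_in_gadget (v : Gv) : (val v).2 < gsize (hd (val v).1).
Proof. exact: valP v. Qed.

Lemma att_in_gadget w e : inc w e -> att w e < gsize (hd w).
Proof. by move=> H; have [_ _ H3 _ _] := gadget_shape (var w) (Hdeg w); exact: H3 (att_attset H). Qed.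

Definition cross_adj (w w' : V) (i j : 'I_9) : bool :=
  [exists e, joins src tgt e w w' && (att w e == i) && (att w' e == j)].

Lemma GadjE (u v : Gv) :
  G u v = (((val u).1 == (val v).1) && gadj (hd (val u).1) (var (val u).1) (val u).2 (val v).2)
          || cross_adj (val u).1 (val v).1 (val u).2 (val v).2.
Proof. by []. Qed.

Lemma cross_adjE w w' i j e0 : inc w e0 -> att w e0 = i ->
  cross_adj w w' i j = (w' == oth w e0) && (j == att (oth w e0) e0).
Proof.
move=> He0 Ha0; apply/existsP/andP => [[e /andP [/andP [Hj /eqP Hi] /eqP Hj']]|[/eqP Hw /eqP Hj]].
  have Hinc := joins_incident Hloop Hj; rewrite -Ha0 in Hi; have Ee := att_inj Hinc He0 Hi; subst e.
  by move: Hj; rewrite joinsE // => /andP [_ /eqP Hw]; subst w'; rewrite Hj' !eqxx.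
by exists e0; rewrite Hw Hj Ha0 !eqxx joins_other_end.
Qed.

Lemma cross_adj_attset w w' i j : cross_adj w w' i j -> i \in attset (hd w).
Proof. by move=> /existsP [e /andP [/andP [/(joins_incident Hloop) He /eqP <-] _]]; apply: att_attset. Qed.

Lemma cross_adj_sym w w' i j : cross_adj w w' i j = cross_adj w' w j i.
Proof.
by apply/existsP/existsP => -[e He]; exists e; move: He; rewrite joins_sym; case/andP => /andP [-> ->] ->.
Qed.

Lemma Gadj_sym : symmetric G.
Proof.
move=> u v; rewrite !GadjE cross_adj_sym eq_sym; congr (_ || _).
by case: eqP => //= ->; rewrite gadj_sym.
Qed.

Definition trace (S : {set Gv}) (w : V) : {set 'I_9} := [set i | (w, i) \in [set val v | v in S]].

Lemma card_trace (S : {set Gv}) : #|S| = \sum_(w : V) #|trace S w|.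
Proof. by rewrite -(card_imset _ val_inj) card_set_pair. Qed.

Lemma trace_mem (S : {set Gv}) (v : Gv) : v \in S -> (val v).2 \in trace S (val v).1.
Proof. by move=> Hv; rewrite inE -surjective_pairing; apply: imset_f. Qed.

Lemma traceP (S : {set Gv}) w i : i \in trace S w -> exists2 v, v \in S & val v = (w, i).
Proof. by rewrite inE => /imsetP [v Hv ->]; exists v. Qed.

Lemma trace_in_gadget (S : {set Gv}) w i : i \in trace S w -> i < gsize (hd w).
Proof. by move=> /traceP [v _ Hv]; have := gvertex_in_gadget v; rewrite Hv. Qed.

Definition glue (F : V -> {set 'I_9}) : {set Gv} := [set v | (val v).2 \in F (val v).1].

Lemma trace_glue (F : V -> {set 'I_9}) w :
  (forall i, i \in F w -> i < gsize (hd w)) -> trace (glue F) w = F w.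
Proof.
move=> HF; apply/setP => i; apply/idP/idP => [/traceP [v]|Hi].
  by rewrite inE => Hv Ev; move: Hv; rewrite Ev.
by rewrite inE; apply/imsetP; exists (gvertex (p := (w, i)) (HF i Hi)); rewrite // inE.
Qed.

Definition cross_nbrs (S : {set Gv}) w (i : 'I_9) : {set E} :=
  [set e | inc w e && (att w e == i) && (att (oth w e) e \in trace S (oth w e))].

Lemma card_cross_nbrs_le1 S w i : #|cross_nbrs S w i| <= 1.
Proof.
apply/card_le1_eqP => e e'; rewrite !inE => /andP [/andP [H1 /eqP H2] _] /andP [/andP [H1' /eqP H2'] _].
by apply: (att_inj H1' H1); rewrite H2 H2'.
Qed.

Lemma card_nbrs (S : {set Gv}) (x : Gv) w i : val x = (w, i) ->
  #|[set y in S | G x y]| =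
  #|[set j in trace S w | gadj (hd w) (var w) i j]| + #|cross_nbrs S w i|.
Proof.
move=> Ex; rewrite -(card_imset _ val_inj).
set A := [set (w, j) | j in [set j in trace S w | gadj (hd w) (var w) i j]].
set B := [set (oth w e, att (oth w e) e) | e in cross_nbrs S w i].
have HA : #|A| = #|[set j in trace S w | gadj (hd w) (var w) i j]| by apply: card_imset => a b [].
have HB : #|B| = #|cross_nbrs S w i|.
  apply: card_in_imset => e e'; rewrite !inE => /andP [/andP [H1 /eqP H2] _] /andP [/andP [H1' /eqP H2'] _] _.
  by apply: (att_inj H1 H1'); rewrite H2 H2'.
have -> : [set val y | y in [set y in S | G x y]] = A :|: B.
  apply/setP => -[w' j]; rewrite inE; apply/imsetP/orP => [[y]|].
    rewrite inE GadjE Ex /= => /andP [Hy /orP [/andP [/eqP Hw Hg]|He]] ->; [left|right].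
      apply/imsetP; exists (val y).2; last by rewrite Hw -surjective_pairing.
      by rewrite inE Hg andbT Hw; apply: trace_mem.
    case/existsP: He => e /andP [/andP [Hj /eqP Hi] /eqP Hj'].
    have Hinc := joins_incident Hloop Hj; move: Hj; rewrite joinsE // => /andP [_ /eqP Hw].
    apply/imsetP; exists e; last by rewrite [val y]surjective_pairing Hw -Hj' Hw.
    by rewrite inE Hinc Hi eqxx -Hw Hj'; apply: trace_mem.
  case=> [/imsetP [j' Hj' [-> ->]]|/imsetP [e He [-> ->]]].
    move: Hj'; rewrite inE => /andP [/traceP [v Hv Ev] Hg].
    by exists v; rewrite // inE Hv GadjE Ex Ev /= eqxx Hg.
  move: (He); rewrite inE => /andP [/andP [Hinc /eqP Hi] /traceP [v Hv Ev]].
  by exists v; rewrite // inE Hv GadjE Ex Ev /= (cross_adjE _ _ Hinc Hi) !eqxx orbT.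
rewrite cardsU HA HB; suff -> : A :&: B = set0 by rewrite cards0 subn0.
apply/setP => p; rewrite !inE; apply/negP => /andP [/imsetP [j _ ->] /imsetP [e He [Hw _]]].
move: He; rewrite inE => /andP [/andP [Hinc _] _].
by move: (other_end_neq Hloop Hinc); rewrite -Hw eqxx.
Qed.

Lemma cubic_Gadj : cubic G.
Proof.
move=> x; set w := (val x).1; set i := (val x).2.
have [S1 S2 S3 _ _] := gadget_shape (var w) (Hdeg w).
have Hall : [set: Gv] = glue (fun w => [set j : 'I_9 | j < gsize (hd w)]).
  by apply/setP => v; rewrite !inE gvertex_in_gadget.
have Htr w' : trace [set: Gv] w' = [set j : 'I_9 | j < gsize (hd w')].
  by rewrite Hall trace_glue // => j; rewrite inE.
have -> : [set y | G x y] = [set y in [set: Gv] | G x y] by apply/setP => y; rewrite !inE.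
rewrite (card_nbrs _ (surjective_pairing (val x))) -/w -/i Htr.
apply: etrans (S1 i (gvertex_in_gadget x)); congr (_ + _).
  by apply: eq_card => j; rewrite !inE andb_idl //; apply: S2.
case: (boolP (i \in attset (hd w))) => Hi /=.
  apply/eqP; rewrite eqn_leq card_cross_nbrs_le1 /=; apply/card_gt0P.
  have [e He Hei] := att_surj Hi; exists e.
  by rewrite inE He Hei eqxx Htr inE att_in_gadget // other_end_incident.
apply: eq_card0 => e; rewrite inE; apply/negP => /andP [/andP [He /eqP Hei] _].
by move: Hi; rewrite -Hei att_attset.
Qed.

Lemma connect_to_root n (x y : Gv) : gadget_depth (hd (val x).1) (val x).2 < n ->
  (val y).1 = (val x).1 -> (val y).2 = 0 :> nat -> connect G x y.
Proof.
elim: n x => [|n IH] x //; case Ex: (val x) => [w i] /= Hr Hy1 Hy2.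
case: (eqVneq (nat_of_ord i) 0) => Hi.
  suff -> : x = y by apply: connect0.
  apply: val_inj; rewrite Ex [val y]surjective_pairing Hy1; congr pair; apply: val_inj.
  by rewrite /= Hy2 Hi.
have [_ S2 _ _ S5] := gadget_shape (var w) (Hdeg w).
have Hx : i < gsize (hd w) by have := gvertex_in_gadget x; rewrite Ex.
have [j Hj Hrk] := S5 i Hx Hi.
have Hxz : G x (gvertex (p := (w, j)) (S2 _ _ Hj)) by rewrite GadjE Ex /= eqxx Hj.
by apply: connect_trans (connect1 Hxz) _; apply: IH => //=; lia.
Qed.

Lemma connect_same_gadget (x y : Gv) : (val x).1 = (val y).1 -> connect G x y.
Proof.
move=> Hxy; have Hw : 0 < gsize (hd (val x).1) by case/andP: (Hdeg (val x).1); case: (hd _) => [|[|[|[|]]]].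
set r := gvertex (p := ((val x).1, @ord0 8)) Hw.
have Hxr : connect G x r by apply: (@connect_to_root (gadget_depth (hd (val x).1) (val x).2).+1).
have Hyr : connect G y r by apply: (@connect_to_root (gadget_depth (hd (val y).1) (val y).2).+1) => //=; rewrite Hxy.
by apply: connect_trans Hxr _; rewrite (sym_connect_sym Gadj_sym).
Qed.

Lemma gconnected_Gadj : hconnected src tgt -> gconnected G.
Proof.
move=> Hc x y; have /connectP [p Hp Hl] := Hc (val x).1 (val y).1.
elim: p x Hp Hl => [|w1 p IH] x /= Hp Hl; first exact: connect_same_gadget.
case/andP: Hp => /existsP [e He] Hp.
move: He; rewrite joinsE // => /andP [Hinc /eqP Hw1]; subst w1.
set a := gvertex (p := ((val x).1, att (val x).1 e)) (att_in_gadget Hinc).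
set b := gvertex (p := (oth (val x).1 e, att (oth (val x).1 e) e)) (att_in_gadget (other_end_incident Hinc)).
have Hab : G a b by rewrite GadjE /= (cross_adjE _ _ Hinc (erefl _)) !eqxx orbT.
apply: connect_trans (connect_same_gadget (x := x) (y := a) (erefl _)) _.
by apply: connect_trans (connect1 Hab) _; apply: IH.
Qed.

(** * Independence and dissociation numbers *)

Section IndependenceDissociation.
Variables (k : nat) (M : {set E}) (o : E -> bool).
Local Notation cov := (covered src tgt M).
Local Notation outg := (outgoing src tgt o).
Local Notation reserved := (reserved src tgt M o).
Hypothesis Hreserved : forall w, #|reserved w| + cov w = 2.
Hypothesis Hsum_alpha : \sum_(w : V) gadget_alpha (hd w) = 6 * k.

Lemma independent_card_le (S : {set Gv}) : independent G S -> #|S| <= 6 * k.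
Proof.
move=> HS; rewrite card_trace -Hsum_alpha; apply: leq_sum => w _.
apply: (gadget_independence_bound (b := var w) (Hdeg w)) => [i|i j]; first exact: trace_in_gadget.
move=> /traceP [v1 H1 E1] /traceP [v2 H2 E2].
move: HS => /forall_inP /(_ v1 H1) /forall_inP /(_ v2 H2); rewrite GadjE E1 E2 /= eqxx /=.
by apply: contra => ->.
Qed.

Definition free_edge (w : V) : option E := [pick e | inc w e && (e \notin reserved w)].

Lemma free_edgeP w e : free_edge w = Some e -> inc w e /\ e \notin reserved w.
Proof. by rewrite /free_edge; case: pickP => [e' /andP [H1 H2] [<-]|]. Qed.

Lemma free_edge_deg3 w : hd w = 3 -> exists e, free_edge w = Some e.
Proof.
rewrite /free_edge; case: pickP => [e _ _|Hn H3]; first by exists e.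
have : [set e | inc w e] \subset reserved w.
  by apply/subsetP => e; rewrite inE => He; have := Hn e; rewrite He => /negbFE.
by move/subset_leq_card; have := Hreserved w; rewrite -/(hdeg src tgt w) H3; lia.
Qed.

(* In a triangle take the vertex on an edge of [H - M] entering [w]. *)
Definition indep_part (w : V) : {set 'I_9} :=
  if hd w == 3 then (if free_edge w is Some e then [set att w e] else set0)
  else indep_set (hd w).

Lemma indep_part_in_gadget w i : i \in indep_part w -> i < gsize (hd w).
Proof.
rewrite /indep_part; case: eqP => H3.
  case E3: (free_edge w) => [e|]; rewrite ?inE // => /eqP ->.
  by have [He _] := free_edgeP E3; apply: att_in_gadget.
by have [H _ _ _] := indep_setP (var w) (Hdeg w); apply: H.
Qed.

Lemma card_indep_part w : #|indep_part w| = gadget_alpha (hd w).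
Proof.
rewrite /indep_part; case: eqP => H3.
  by have [e E3] := free_edge_deg3 H3; rewrite E3 cards1 H3.
by have [_ _ _ H] := indep_setP (var w) (Hdeg w); apply/H/eqP.
Qed.

Lemma indep_part_attset w i : i \in indep_part w -> i \in attset (hd w) ->
  exists2 e, free_edge w = Some e & i = att w e.
Proof.
rewrite /indep_part; case: eqP => H3.
  by case E3: (free_edge w) => [e|]; rewrite ?inE // => /eqP -> _; exists e.
have [_ _ H _] := indep_setP (var w) (Hdeg w).
by move=> Hi Ha; move: (pred0P H i) => /=; rewrite Hi Ha.
Qed.

Lemma indep_part_independent w : {in indep_part w &, forall i j, ~~ gadj (hd w) (var w) i j}.
Proof.
have [_ _ _ Hirr _] := gadget_shape (var w) (Hdeg w).
rewrite /indep_part; case: eqP => H3.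
  by case: (free_edge w) => [e|] i j; rewrite ?inE // => /eqP -> /eqP ->; rewrite Hirr.
by have [_ H _ _] := indep_setP (var w) (Hdeg w).
Qed.

Lemma independent_glue_indep_part : independent G (glue indep_part).
Proof.
apply/forall_inP => u; rewrite inE => Hu; apply/forall_inP => v; rewrite inE => Hv.
rewrite GadjE negb_or; apply/andP; split.
  apply/negP => /andP [/eqP Ew Hg]; rewrite -Ew in Hv.
  by move: (indep_part_independent Hu Hv); rewrite Hg.
apply/negP => He; have Hai := cross_adj_attset He.
have Haj : (val v).2 \in attset (hd (val v).1) by rewrite cross_adj_sym in He; apply: cross_adj_attset He.
have [e E3 Ei] := indep_part_attset Hu Hai; have [f F3 Fj] := indep_part_attset Hv Haj.
have [He1 Hr1] := free_edgeP E3; have [Hf1 Hr2] := free_edgeP F3.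
case/existsP: He => g /andP [/andP [Hj /eqP Hgi] /eqP Hgj].
have Eg : g = e by apply: (att_inj (joins_incident Hloop Hj) He1); rewrite Hgi.
rewrite joins_sym in Hj.
have Fg : g = f by apply: (att_inj (joins_incident Hloop Hj) Hf1); rewrite Hgj.
subst g f; move: Hr1 Hr2; rewrite !inE He1 Hf1 !negb_or /= (outgoing_joins Hloop o Hj).
by case: (outg (val v).1 e); rewrite !andbF.
Qed.

Lemma alpha_Gadj : alpha G = 6 * k.
Proof.
apply/eqP; rewrite eqn_leq; apply/andP; split; first by apply/bigmax_leqP => S; apply: independent_card_le.
have -> : 6 * k = #|glue indep_part|.
  rewrite card_trace -Hsum_alpha; apply: eq_bigr => w _.
  by rewrite trace_glue ?card_indep_part // => i; apply: indep_part_in_gadget.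
exact: (leq_bigmax_cond (F := fun S : {set Gv} => #|S|) _ independent_glue_indep_part).
Qed.

Hypothesis Hm : induced_matching src tgt M.
Hypothesis HMk : #|M| = k.

Lemma covered_of_hdeg1 w : hd w = 1 -> cov w.
Proof.
move=> H1; apply: contraT => Hc; have := Hreserved w; rewrite (negbTE Hc) addn0.
have : reserved w \subset [set e | inc w e] by apply/subsetP => e /reserved_incident; rewrite inE.
by move/subset_leq_card; rewrite -/(hdeg src tgt w) H1; lia.
Qed.

Definition diss_part (w : V) : {set 'I_9} := core_set (hd w) :|: [set att w e | e in reserved w].

Lemma card_att_reserved w : #|[set att w e | e in reserved w]| = #|reserved w|.
Proof. by apply: card_in_imset => e e' /reserved_incident H1 /reserved_incident H2; apply: att_inj. Qed.

Lemma att_reserved_attset w : [set att w e | e in reserved w] \subset attset (hd w).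
Proof. by apply/subsetP => i /imsetP [e /reserved_incident He ->]; apply: att_attset. Qed.

Lemma diss_part_in_gadget w i : i \in diss_part w -> i < gsize (hd w).
Proof.
have [H _ _] := core_setP (Hdeg w).
by rewrite inE => /orP [/H //|/imsetP [e /reserved_incident He ->]]; apply: att_in_gadget.
Qed.

Lemma att_diss_part w e : inc w e -> att w e \in diss_part w -> e \in reserved w.
Proof.
move=> He; have [_ Hdis _] := core_setP (Hdeg w).
rewrite inE => /orP [Hc|/imsetP [e' He' Ee]].
  by move: (pred0P Hdis (att w e)) => /=; rewrite Hc att_attset.
by rewrite (att_inj He (reserved_incident He') Ee).
Qed.

Lemma sum_diss_part : \sum_(w : V) #|diss_part w| = 10 * k.
Proof.
have Hcard w : #|diss_part w| + cov w = 2 * gadget_alpha (hd w).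
  have [_ Hdis Hsize] := core_setP (Hdeg w).
  rewrite cardsU card_att_reserved Hsize.
  have /eqP -> : core_set (hd w) :&: [set att w e | e in reserved w] == set0.
    by rewrite setI_eq0; apply: disjointWr Hdis; apply: att_reserved_attset.
  rewrite cards0 subn0 -addnA Hreserved.
  by case/andP: (Hdeg w); case: (hd w) => [|[|[|[|]]]].
have H : \sum_(w : V) (#|diss_part w| + cov w) = 2 * (6 * k).
  by rewrite -Hsum_alpha big_distrr; apply: eq_bigr => w _; apply: Hcard.
by move: H; rewrite big_split /= (sum_covered Hloop Hm) HMk; lia.
Qed.

(* Two gadgets meet across an edge of [H] only along an edge of [M], and the
   attachment vertex of an [M]-edge is then isolated inside its own gadget. *)
Lemma dissociation_glue_diss_part : dissociation G (glue diss_part).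
Proof.
have Htr w : trace (glue diss_part) w = diss_part w by apply: trace_glue => i; apply: diss_part_in_gadget.
apply/forall_inP => x; rewrite inE => Hx; case Ex: (val x) => [w i].
rewrite (card_nbrs _ Ex) Htr; rewrite Ex /= in Hx.
have HA : #|[set att w e | e in reserved w]| = 1 \/ (#|[set att w e | e in reserved w]| = 2 /\ hd w != 1).
  rewrite card_att_reserved; have := Hreserved w; case: (boolP (cov w)) => Hc.
    by rewrite addn1 => -[]; left.
  by rewrite addn0 => ->; right; split=> //; apply: contra Hc => /eqP /covered_of_hdeg1.
have [Hdeg1 Hisol] := core_attach_dissociation (var w) (Hdeg w) (att_reserved_attset w) HA.
case: (eqVneq #|cross_nbrs (glue diss_part) w i| 0) => [->|HQ]; first by rewrite addn0; apply: Hdeg1.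
have [e] : exists e, e \in cross_nbrs (glue diss_part) w i by apply/set0Pn; rewrite -cards_eq0.
rewrite inE Htr => /andP [/andP [Hinc /eqP Hi] Ho].
have He1 : e \in reserved w by apply: att_diss_part; rewrite // Hi.
have He2 : e \in reserved (oth w e) by apply: att_diss_part; rewrite // other_end_incident.
have Hcw : cov w by apply/existsP; exists e; rewrite (reserved_shared Hloop He1 He2).
rewrite (Hisol _ i) ?add0n ?card_cross_nbrs_le1 //; last by apply/imsetP; exists e.
by rewrite card_att_reserved; have := Hreserved w; rewrite Hcw addn1 => -[].
Qed.

Lemma diss_ge : 10 * k <= diss G.
Proof.
have -> : 10 * k = #|glue diss_part|.
  rewrite card_trace -sum_diss_part; apply: eq_bigr => w _.
  by rewrite trace_glue // => i; apply: diss_part_in_gadget.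
exact: (leq_bigmax_cond (F := fun S : {set Gv} => #|S|) _ dissociation_glue_diss_part).
Qed.

Section DissociationUpperBound.
Variable D : {set Gv}.
Hypothesis HD : dissociation G D.
Local Notation X := (trace D).
Local Notation ldeg w i := #|[set j in X w | gadj (hd w) (var w) i j]|.

Lemma trace_dissociation w i : i \in X w -> ldeg w i + #|cross_nbrs D w i| <= 1.
Proof. by move=> /traceP [v Hv Ev]; rewrite -(card_nbrs _ Ev); move: HD => /forall_inP /(_ v Hv). Qed.

Definition hits (w : V) : {set E} := [set e | inc w e && (att w e \in X w)].
Definition misses (w : V) : {set E} := [set e | inc w e && (att w e \notin X w)].
Definition charged (w : V) : {set E} := if 2 <= #|hits w| then hits w else set0.

Lemma card_trace_attset w : #|X w :&: attset (hd w)| = #|hits w|.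
Proof.
have -> : X w :&: attset (hd w) = [set att w e | e in hits w].
  apply/setP => i; rewrite inE; apply/andP/imsetP => [[Hi Ha]|[e He ->]].
    by have [e He Ee] := att_surj Ha; exists e; rewrite // inE He Ee Hi.
  by move: He; rewrite inE => /andP [He ->]; rewrite att_attset.
by apply: card_in_imset => e e'; rewrite !inE => /andP [H1 _] /andP [H2 _]; apply: att_inj.
Qed.

Lemma card_hits_misses w : #|hits w| + #|misses w| = hd w.
Proof.
rewrite /hdeg -(cardsID [set e | att w e \in X w] [set e | inc w e]).
by congr (_ + _); apply: eq_card => e; rewrite !inE // andbC.
Qed.

Lemma hits_bound w : [/\ #|X w| <= gadget_core_size (hd w) + #|hits w|, #|hits w| <= 2 &
  2 <= #|hits w| -> forall e, e \in hits w -> 0 < ldeg w (att w e)].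
Proof.
have [H1 H2 H3] := gadget_dissociation_bound (b := var w) (Hdeg w) (@trace_in_gadget D w)
  (fun i Hi => leq_trans (leq_addr _ _) (trace_dissociation Hi)).
rewrite -card_trace_attset; split=> // H e; rewrite inE => /andP [He Hx]; apply: H3 => //.
by rewrite inE Hx att_attset.
Qed.

Lemma discharge_vertex w : 3 * #|X w| + #|misses w| <= 5 * gadget_alpha (hd w) + #|charged w|.
Proof.
have [L1 L2 _] := hits_bound w; have Hhm := card_hits_misses w.
have Hcc : 3 * gadget_core_size (hd w) + hd w + 2 = 5 * gadget_alpha (hd w).
  by case/andP: (Hdeg w); case: (hd w) => [|[|[|[|]]]].
by rewrite /charged; case: ifP => H; rewrite ?cards0; lia.
Qed.

(* An edge charged at one end is missed at the other. *)
Lemma discharge_edge e : #|[set w | e \in charged w]| <= #|[set w | e \in misses w]|.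
Proof.
case: (set_0Vmem [set w | e \in charged w]) => [->|[w Hw]]; first by rewrite cards0.
have [Ht He] : 2 <= #|hits w| /\ e \in hits w.
  by move: Hw; rewrite inE /charged; case: ifP => // _; rewrite inE.
move: (He); rewrite inE => /andP [Hinc Hx].
have [_ _ L3] := hits_bound w.
have Hw' : att (oth w e) e \notin X (oth w e).
  apply/negP => Hy; have := trace_dissociation Hx; have := L3 Ht e He.
  suff : 0 < #|cross_nbrs D w (att w e)| by lia.
  by apply/card_gt0P; exists e; rewrite inE Hinc eqxx Hy.
have H1 : #|[set w | e \in charged w]| <= 1.
  rewrite -(cards1 w); apply: subset_leq_card; apply/subsetP => x; rewrite !inE /charged.
  case: ifP => _; last by rewrite inE.
  rewrite inE => /andP [Hix Hxx]; case: (incident_endpoints Hix Hinc) => Ex; first by rewrite Ex.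
  by rewrite Ex (negbTE Hw') in Hxx.
suff : 0 < #|[set w | e \in misses w]| by lia.
by apply/card_gt0P; exists (oth w e); rewrite inE [_ \in misses _]inE (other_end_incident Hinc).
Qed.

Lemma dissociation_card_le : #|D| <= 10 * k.
Proof.
have Hv : \sum_(w : V) (3 * #|X w| + #|misses w|) <= \sum_(w : V) (5 * gadget_alpha (hd w) + #|charged w|).
  by apply: leq_sum => w _; apply: discharge_vertex.
have He : \sum_(w : V) #|charged w| <= \sum_(w : V) #|misses w|.
  rewrite (eq_bigr (fun w => #|[set e | e \in charged w]|)) => [|w _]; last by apply: eq_card => e; rewrite inE.
  rewrite [X in _ <= X](eq_bigr (fun w => #|[set e | e \in misses w]|)) => [|w _]; last by apply: eq_card => e; rewrite inE.
  rewrite (double_counting (fun w e => e \in charged w)) (double_counting (fun w e => e \in misses w)).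
  by apply: leq_sum => e _; apply: discharge_edge.
have E3 : \sum_(w : V) 3 * #|X w| = 3 * \sum_(w : V) #|X w| by rewrite big_distrr.
have E5 : \sum_(w : V) 5 * gadget_alpha (hd w) = 5 * (6 * k) by rewrite -Hsum_alpha big_distrr.
rewrite big_split [X in _ <= X]big_split /= E3 E5 in Hv.
by rewrite card_trace; lia.
Qed.
End DissociationUpperBound.

Lemma diss_Gadj : diss G = 10 * k.
Proof.
by apply/eqP; rewrite eqn_leq diss_ge andbT; apply/bigmax_leqP => S; apply: dissociation_card_le.
Qed.
End IndependenceDissociation.
End Construction.

Theorem lemma1 :
  forall (k : nat), 0 < k ->
  forall (V E : finType) (src tgt : E -> V),
    in_Hk src tgt k ->
  forall (att : V -> E -> 'I_9) (var : V -> bool),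
    valid_attach src tgt att ->
    let G := Gadj src tgt att var in
    [/\ gconnected G, cubic G, alpha G = 6 * k & diss G = 10 * k].
Proof.
(* Coverage of the degree-1 vertices follows from the orientation condition. *)
move=> k Hk V E src tgt [Hloop [Hconn [Hdeg3 [Hweight [M [Hm HMk _ [o Horient]]]]]]] att var Hatt G.
have Hdeg := hdeg_bounds Hloop Hconn Hdeg3 Hweight Hk.
have Hreserved := card_reserved Hloop Hconn Hdeg3 Hweight Hk Hm HMk Horient.
have Hsum := sum_gadget_alpha Hweight.
split.
- exact (gconnected_Gadj Hloop var Hatt Hdeg Hconn).
- exact (cubic_Gadj Hloop var Hatt Hdeg).
- exact (alpha_Gadj Hloop var Hatt Hdeg Hreserved Hsum).
- exact (diss_Gadj Hloop var Hatt Hdeg Hreserved Hsum Hm HMk).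
Qed.
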